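(* If $M$ is a perfect matching of an ST graph $G$, then $G$ is isomorphic to $\mathrm{Split}(\mathrm{Join}(G,M))$.
   Context: A digraph $G$ is a finite set $V(G)$ with $E(G)\subseteq V(G)\times V(G)$ (loops allowed). A source has no in-neighbors, a sink has no out-neighbors; $G$ is an ST graph if every vertex is a source or a sink. A matching $M$ is a set of arcs no two of which share an endpoint; $V(M)$ is the set of endpoints of its arcs; $M$ is perfect if $V(M)=V(G)$. For a matching $M$ of $G$, $\mathrm{Join}(G,M)$ is the digraph with a vertex $(v,v)$ for each $v\in V(G)\setminus V(M)$ and a vertex $(v,w)$ for each $v\to w\in M$, where $(v,w)\to(x,y)$ is an arc iff $v\to y\in E(G)$. For a digraph $D$, $\mathrm{Split}(D)$ has a vertex $\mathrm{out}(v)$ for each non-sink $v$ of $D$ and a vertex $\mathrm{in}(w)$ for each non-source $w$ of $D$ (all distinct), with $\mathrm{out}(v)\to\mathrm{in}(w)$ an arc iff $v\to w\in E(D)$, and no other arcs. Isomorphism means a bijection of vertex sets mapping arcs exactly onto arcs. *)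

(* Digraphs are a finite type V with an arc relation E : rel V
   (loops allowed: E v v may hold). *)
From mathcomp Require Import all_boot.
Set Implicit Arguments. Unset Strict Implicit. Unset Printing Implicit Defensive.

Section Digraph.
Variables (V : finType) (E : rel V).

Definition is_source (v : V) : bool := [forall u, ~~ E u v].
Definition is_sink (v : V) : bool := [forall w, ~~ E v w].

Definition ST_graph : Prop := forall v, is_source v || is_sink v.

Definition arc_ends (a : V * V) : {set V} := [set a.1; a.2].

Definition matching (M : {set V * V}) : Prop :=
  (forall a, a \in M -> E a.1 a.2) /\
  (forall a b, a \in M -> b \in M -> a != b -> [disjoint arc_ends a & arc_ends b]).

Definition VM (M : {set V * V}) : {set V} := \bigcup_(a in M) arc_ends a.

Definition perfect_matching (M : {set V * V}) : Prop :=
  matching M /\ VM M = [set: V].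

(* Join(G, M): vertices (v,v) for v not in V(M), and (v,w) for v->w in M *)
Definition join_vertex (M : {set V * V}) (p : V * V) : bool :=
  (p \in M) || ((p.1 == p.2) && (p.1 \notin VM M)).

Definition Join_type (M : {set V * V}) : finType := {p : V * V | join_vertex M p}.

Definition Join_rel (M : {set V * V}) : rel (Join_type M) :=
  fun p q => E (val p).1 (val q).2.

End Digraph.

Section SplitDef.
Variables (T : finType) (e : rel T).

(* Split(D): out(v) = inl v for non-sink v, in(w) = inr w for non-source w *)
Definition split_vertex (s : T + T) : bool :=
  match s with
  | inl v => ~~ is_sink e v
  | inr w => ~~ is_source e w
  end.

Definition Split_type : finType := {s : T + T | split_vertex s}.

Definition Split_rel : rel Split_type :=
  fun a b => match val a, val b with
             | inl v, inr w => e v w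
             | _, _ => false
             end.
End SplitDef.

Definition isomorphic (T1 T2 : finType) (e1 : rel T1) (e2 : rel T2) : Prop :=
  exists f : T1 -> T2, bijective f /\ forall x y, e1 x y = e2 (f x) (f y).

Arguments Join_type {V} M.
Arguments Join_rel {V} E M.
Arguments Split_type {T} e.
Arguments Split_rel {T} e.
Arguments isomorphic {T1 T2} e1 e2.

From mathcomp Require Import all_boot.

(* Every vertex of G lies on exactly one arc v -> w of M, and that arc is a
   Join vertex (v,w) carrying a loop; hence out((v,w)) and in((v,w)) are both
   Split vertices.  Sending out((v,w)) to v and in((v,w)) to w is therefore a
   bijection onto V(G).  It maps arcs exactly: out(p) -> in(q) is an arc iff
   p.1 -> q.2 is an arc of G, and the other pairs of endpoints never span an
   arc of G, because in an ST graph no vertex has both an in- and an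
   out-neighbour. *)

Set Implicit Arguments.
Unset Strict Implicit.
Unset Printing Implicit Defensive.

Lemma isomorphic_of_mono (T1 T2 : finType) (e1 : rel T1) (e2 : rel T2)
    (g : T2 -> T1) :
  injective g -> (forall x, exists y, g y = x) ->
  {mono g : x y / e2 x y >-> e1 x y} -> isomorphic e1 e2.
Proof.
move=> g_inj g_surj g_mono; have [f gK] := fin_all_exists g_surj.
exists f; split; first by exists g => // y; apply: g_inj; rewrite gK.
by move=> x y; rewrite -g_mono !gK.
Qed.

Section STGraph.
Variables (V : finType) (E : rel V).
Hypothesis stE : ST_graph E.

Lemma ST_no_path2 u v w : E u v -> E v w -> False.
Proof.
move=> Euv Evw; case/orP: (stE v) => /forallP.
- by move/(_ u); rewrite Euv.
- by move/(_ w); rewrite Evw.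
Qed.

Lemma ST_no_loop v : ~~ E v v.
Proof. by apply/negP => Evv; apply: (ST_no_path2 Evv Evv). Qed.

Variable M : {set V * V}.
Hypotheses (arcM : forall a, a \in M -> E a.1 a.2)
           (disjM : forall a b, a \in M -> b \in M -> a != b ->
                      [disjoint arc_ends a & arc_ends b])
           (coverM : VM M = [set: V]).

Lemma matching_common_end a b u :
  a \in M -> b \in M -> u \in arc_ends a -> u \in arc_ends b -> a = b.
Proof.
move=> aM bM ua ub; apply/eqP/negPn/negP => /(disjM aM bM).
by move/disjointFr/(_ ua); rewrite ub.
Qed.

Lemma join_vertex_in_matching (p : Join_type M) : val p \in M.
Proof. by case/orP: (valP p) => // /andP[_]; rewrite coverM inE. Qed.

Let J := Join_rel E M.

Lemma join_loop (p : Join_type M) : J p p.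
Proof. exact/arcM/join_vertex_in_matching. Qed.

Definition split_end (s : Split_type J) : V :=
  match val s with inl p => (val p).1 | inr p => (val p).2 end.

Lemma split_end_inj : injective split_end.
Proof.
have end_eq (p q : Join_type M) u :
    u \in arc_ends (val p) -> u \in arc_ends (val q) -> p = q.
  by move=> up uq; apply/val_inj/(matching_common_end _ _ up uq);
     apply: join_vertex_in_matching.
have no_head_tail (p q : Join_type M) : (val p).1 <> (val q).2.
  move=> pq; have ep : p = q.
    by apply: (end_eq _ _ (val p).1); rewrite !inE ?pq eqxx ?orbT.
  move: (ST_no_loop (val q).2) (join_loop q).
  by rewrite /J /Join_rel -pq ep => /negbTE->.
move=> s t; rewrite /split_end => est; apply: val_inj.
case: (val s) est => p; case: (val t) => q /= est.
- by congr inl; apply: (end_eq _ _ (val p).1); rewrite !inE ?est eqxx.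
- by case: (no_head_tail _ _ est).
- by case: (no_head_tail _ _ (esym est)).
- by congr inr; apply: (end_eq _ _ (val p).2); rewrite !inE ?est eqxx ?orbT.
Qed.

Lemma split_end_surj u : exists s, split_end s = u.
Proof.
have : u \in VM M by rewrite coverM inE.
case/bigcupP => a aM; pose p : Join_type M := Sub a (introT orP (or_introl aM)).
have not_sink : ~~ is_sink J p.
  by apply/forallPn; exists p; rewrite negbK join_loop.
have not_source : ~~ is_source J p.
  by apply/forallPn; exists p; rewrite negbK join_loop.
rewrite !inE => /orP[] /eqP ->.
- by exists (Sub (inl p) not_sink : Split_type J).
- by exists (Sub (inr p) not_source : Split_type J).
Qed.

Lemma split_end_mono : {mono split_end : s t / Split_rel J s t >-> E s t}.
Proof.
have no_arc_into_tail u v w : E v w -> E u v = false.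
  by move=> Evw; apply/negP => Euv; apply: ST_no_path2 Euv Evw.
have no_arc_from_head u v w : E u v -> E v w = false.
  by move=> Euv; apply/negP; apply: ST_no_path2 Euv.
have arc (p : Join_type M) := arcM (join_vertex_in_matching p).
move=> s t; rewrite /split_end /Split_rel.
case: (val s) => p; case: (val t) => q //=.
- exact: no_arc_into_tail (arc q).
- exact: no_arc_into_tail (arc q).
- exact: no_arc_from_head (arc p).
Qed.

End STGraph.

Theorem lemma5 (V : finType) (E : rel V) (M : {set V * V}) :
  ST_graph E -> perfect_matching E M ->
  isomorphic E (Split_rel (Join_rel E M)).
Proof.
move=> stE [[arcM disjM] coverM].
exact: isomorphic_of_mono (split_end_inj stE arcM disjM coverM)
  (split_end_surj arcM coverM) (split_end_mono stE arcM coverM).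
Qed.
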